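(* Let $n\ge1$. Then $x=2$ is a double zero of $\Phi_n(x)$, i.e. $\Phi_n(2)=\Phi_n'(2)=0$ and $\Phi_n''(2)\neq0$. Moreover, all zeros of $\Phi_n(x)$ other than $x=2$ are real and lie in the interval $(-2,2)$.
   Context: $U_n$ is the Chebyshev polynomial of the second kind, $U_n(\cos\theta)=\sin((n+1)\theta)/\sin\theta$, $\tilde U_n(x)=U_n(x/2)$, and $\Phi_n(x)=((n+1)x^2-6x-4n)\tilde U_n(x)+2(x+2)\tilde U_{n-1}(x)+2(x+2)$. *)

From HB Require Import structures.
From mathcomp Require Import all_boot all_order all_algebra all_field.
Set Implicit Arguments. Unset Strict Implicit. Unset Printing Implicit Defensive.
Import Order.TTheory GRing.Theory Num.Theory.
Local Open Scope ring_scope.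

(* Ut n = \tilde U_n(x) = U_n(x/2): Ut 0 = 1, Ut 1 = X,
   Ut (n+2) = X * Ut (n+1) - Ut n  (from U_{n+1}(y) = 2y U_n(y) - U_{n-1}(y)). *)
Fixpoint Ut_pair (R : nzRingType) (n : nat) : {poly R} * {poly R} :=
  match n with
  | 0 => (1, 'X)
  | m.+1 => let: (a, b) := Ut_pair R m in (b, 'X * b - a)
  end.

Definition Ut (R : nzRingType) (n : nat) : {poly R} := (Ut_pair R n).1.

Definition Phi (R : nzRingType) (n : nat) : {poly R} :=
  ((n.+1)%:R *: 'X^2 - 6%:R *: 'X - (4 * n)%:R%:P) * Ut R n
  + 2%:R *: ('X + 2%:R%:P) * Ut R n.-1
  + 2%:R *: ('X + 2%:R%:P).

(* Substitute x = y^2 - 2.  Then y Phi_n(y^2 - 2) = Ut_n(y) E_n(y) with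
   E_n = A_n Ct_{n+1} + 2 y^2 Ct_{n-1}, where Ct_k(y) = 2 T_k(y/2) and A_n is
   the quadratic coefficient of Phi_n at x = y^2 - 2.  Writing y = w + 1/w, a
   root of Ut_n or of Ct_{n+1} makes w a root of unity, so it is real and lies
   in (-2, 2).  At a root t of Ct_{n+1} one has E_n(t) Ct_{n+1}'(t) =
   4 (n+1) t^3; as the derivative alternates in sign along consecutive simple
   roots, E_n alternates in sign along the roots of X Ct_{n+1} (or, when 0 is
   a root of Ct_{n+1}, E_n / X alternates along the roots of Ct_{n+1}), which
   gives n+1 roots of E_n in (-2, 2).  The double zero of Phi_n at 2 makes
   (y^2 - 4)^2 divide E_n, and deg E_n = n + 5, so E_n has no other roots.
   Hence every root z <> 2 of Phi_n is y^2 - 2 with y real in (-2, 2), and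
   z <> -2 because Phi_n(-2) <> 0. *)

From HB Require Import structures.
From mathcomp Require Import all_boot all_order all_algebra all_field.
From mathcomp Require Import ring lra zify.
From mathcomp Require polyrcf.
Import Order.TTheory GRing.Theory Num.Theory.
Local Open Scope ring_scope.
Set Implicit Arguments. Unset Strict Implicit. Unset Printing Implicit Defensive.

Lemma nat_ind2 (P : nat -> Prop) :
  P 0%N -> P 1%N -> (forall k, P k -> P k.+1 -> P k.+2) -> forall k, P k.
Proof.
move=> P0 P1 PSS k; suff [] : P k /\ P k.+1 by [].
by elim: k => [|k [Pk Pk1]]; split => //; apply: PSS.
Qed.

Lemma horner_natr (R : nzRingType) k (x : R) : (k%:R : {poly R}).[x] = k%:R.
Proof. by rewrite -polyC_natr hornerC. Qed.

(* Unlike [hornerE], this keeps numerals intact and avoids the monoid-law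
   forms of [+] and [*] that [ring] and [field] do not recognise. *)
Definition hornerEn :=
  (horner_natr, hornerD, hornerN, hornerM, hornerX, hornerC, horner_exp).

Section Chebyshev.
Variable R : comNzRingType.
Local Notation U := (Ut R).

Lemma Ut_pairE k : Ut_pair R k = (U k, U k.+1).
Proof. by elim: k => [|k IH] //=; rewrite /Ut /= IH. Qed.

Lemma Ut0 : U 0 = 1. Proof. by []. Qed.
Lemma Ut1 : U 1 = 'X. Proof. by []. Qed.
Lemma UtSS k : U k.+2 = 'X * U k.+1 - U k.
Proof. by rewrite {1}/Ut /= Ut_pairE. Qed.

(* [Ct k] is [2 T_k(X/2)], the first-kind companion of [Ut k = U_k(X/2)]. *)
Fixpoint Ct_pair k : {poly R} * {poly R} :=
  if k is m.+1 then let: (a, b) := Ct_pair m in (b, 'X * b - a) else (2, 'X).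

Definition Ct k := (Ct_pair k).1.

Lemma Ct_pairE k : Ct_pair k = (Ct k, Ct k.+1).
Proof. by elim: k => [|k IH] //=; rewrite /Ct /= IH. Qed.

Lemma Ct0 : Ct 0 = 2. Proof. by []. Qed.
Lemma Ct1 : Ct 1 = 'X. Proof. by []. Qed.
Lemma CtSS k : Ct k.+2 = 'X * Ct k.+1 - Ct k.
Proof. by rewrite {1}/Ct /= Ct_pairE. Qed.

Lemma CtSS_Ut k : Ct k.+2 = 'X * U k.+1 - 2 * U k.
Proof.
elim/nat_ind2: k => [||k IH0 IH1]; rewrite CtSS.
- by rewrite Ct1 Ct0 Ut1 Ut0; ring.
- by rewrite CtSS Ct1 Ct0 UtSS Ut1 Ut0; ring.
- by rewrite IH0 IH1 !UtSS; ring.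
Qed.

Lemma Ut_Ct_wronskian k : U k.+1 * Ct k - U k * Ct k.+1 = 'X.
Proof.
elim: k => [|k IH]; first by rewrite Ut0 Ut1 Ct0 Ct1; ring.
by rewrite UtSS CtSS -IH; ring.
Qed.

Lemma Ct_Ut_wronskian k : Ct k.+1 * U k.+1 - Ct k.+2 * U k = 2.
Proof.
elim: k => [|k IH]; first by rewrite Ut0 Ut1 CtSS Ct1 Ct0; ring.
by rewrite [U k.+2]UtSS [Ct k.+3]CtSS -IH; ring.
Qed.

Lemma Ut_cassini k : U k.+1 ^+ 2 - U k.+2 * U k = 1.
Proof.
elim: k => [|k IH]; first by rewrite UtSS Ut1 Ut0; ring.
by rewrite [U k.+3]UtSS -IH UtSS; ring.
Qed.

Lemma Ct_pell k : Ct k.+1 ^+ 2 - ('X ^+ 2 - 4) * U k ^+ 2 = 4.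
Proof.
case: k => [|k]; first by rewrite Ct1 Ut0; ring.
transitivity (4 * (U k.+1 ^+ 2 - U k.+2 * U k)); last by rewrite Ut_cassini mulr1.
by rewrite CtSS_Ut UtSS; ring.
Qed.

Lemma Ct_Ut_shift k : Ct k.+1 * U k.+2 - Ct k.+3 * U k = 2 * 'X.
Proof.
transitivity ('X * (Ct k.+1 * U k.+1 - Ct k.+2 * U k)).
  by rewrite [U k.+2]UtSS [Ct k.+3]CtSS; ring.
by rewrite Ct_Ut_wronskian mulrC.
Qed.

Lemma deriv_Ct k : (Ct k.+1)^`() = k.+1%:R * U k.
Proof.
elim/nat_ind2: k => [||k IH0 IH1].
- by rewrite Ct1 derivX Ut0 mulr1.
- by rewrite CtSS Ct1 Ct0 Ut1 derivB derivM derivX -polyC_natr derivC; ring.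
- rewrite CtSS derivB derivM derivX IH0 IH1 CtSS_Ut [U k.+2]UtSS !mulrS; ring.
Qed.

Lemma deriv_UtSS k : (U k.+2)^`() = U k.+1 + 'X * (U k.+1)^`() - (U k)^`().
Proof. by rewrite UtSS derivB derivM derivX mul1r. Qed.

Lemma deriv2_UtSS k :
  (U k.+2)^`()^`() = 2 * (U k.+1)^`() + 'X * (U k.+1)^`()^`() - (U k)^`()^`().
Proof. by rewrite deriv_UtSS !derivB derivD derivM derivX; ring. Qed.

Lemma Ut_comp_sqr k : 'X * (U k \Po ('X ^+ 2 - 2)) = U k * Ct k.+1.
Proof.
elim/nat_ind2: k => [||k IH0 IH1].
- by rewrite Ut0 -polyC1 comp_polyC polyC1 Ct1; ring.
- by rewrite Ut1 comp_polyX CtSS Ct1 Ct0; ring.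
- rewrite {1}UtSS comp_polyB comp_polyM comp_polyX.
  transitivity (('X ^+ 2 - 2) * ('X * (U k.+1 \Po ('X ^+ 2 - 2)))
                - 'X * (U k \Po ('X ^+ 2 - 2))); first by ring.
  rewrite IH0 IH1.
  transitivity (U k.+2 * Ct k.+3
    - 'X * (Ct k.+1 * U k.+1 - Ct k.+2 * U k - 2)
    + 2 * (U k.+1 * Ct k - U k * Ct k.+1 - 'X)).
    by rewrite [Ct k.+3]CtSS [Ct k.+2]CtSS UtSS; ring.
  by rewrite Ct_Ut_wronskian Ut_Ct_wronskian !subrr; ring.
Qed.

Lemma Ct_recip (w v : R) k : w * v = 1 -> (Ct k).[w + v] = w ^+ k + v ^+ k.
Proof.
move=> wv; elim/nat_ind2: k => [||k IH0 IH1].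
- by rewrite Ct0 horner_natr !expr0.
- by rewrite Ct1 hornerX !expr1.
- rewrite CtSS !hornerEn IH0 IH1 -[w ^+ k + _]mul1r -wv !exprS; ring.
Qed.

Lemma Ut_recip (w v : R) k : w * v = 1 ->
  (w - v) * (U k).[w + v] = w ^+ k.+1 - v ^+ k.+1.
Proof.
move=> wv; elim/nat_ind2: k => [||k IH0 IH1].
- by rewrite Ut0 hornerC mulr1 !expr1.
- by rewrite Ut1 hornerX; ring.
- rewrite UtSS !hornerEn.
  transitivity ((w + v) * ((w - v) * (U k.+1).[w + v]) - (w - v) * (U k).[w + v]).
    by ring.
  by rewrite IH0 IH1 -[w ^+ k.+1 - _]mul1r -wv !exprS; ring.
Qed.

End Chebyshev.

Section ValuesAt2.
Variable F : numFieldType.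
Local Notation U := (Ut F).

Lemma Ut_at2 k : (U k).[2] = k.+1%:R.
Proof.
elim/nat_ind2: k => [||k IH0 IH1]; first by rewrite Ut0 hornerC.
  by rewrite Ut1 hornerX.
by rewrite UtSS !hornerEn IH0 IH1 !mulrS; ring.
Qed.

Lemma Ut_atN2 k : (U k).[-2] = (-1) ^+ k * k.+1%:R.
Proof.
elim/nat_ind2: k => [||k IH0 IH1]; first by rewrite Ut0 hornerC; ring.
  by rewrite Ut1 hornerX; ring.
by rewrite UtSS !hornerEn IH0 IH1 !exprS !mulrS; ring.
Qed.

Lemma deriv_Ut_at2 k : ((U k)^`()).[2] = (k * k.+1 * k.+2)%:R / 6.
Proof.
have n6 : (6%:R : F) != 0 by rewrite pnatr_eq0.
elim/nat_ind2: k => [||k IH0 IH1].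
- by rewrite Ut0 -polyC1 derivC hornerC mul0r.
- by rewrite Ut1 derivX hornerC; field.
- rewrite deriv_UtSS !hornerEn Ut_at2 IH0 IH1.
  by rewrite !natrM !mulrS; field.
Qed.

Lemma deriv2_Ut_at2 k :
  ((U k)^`(2)).[2] = k%:R * (k%:R ^+ 2 - 1) * k.+2%:R * k.+3%:R / 60.
Proof.
have n60 : (60%:R : F) != 0 by rewrite pnatr_eq0.
rewrite derivnS derivn1; elim/nat_ind2: k => [||k IH0 IH1].
- by rewrite Ut0 -polyC1 !derivC hornerC; field.
- by rewrite Ut1 derivX -polyC1 derivC hornerC; field.
- rewrite deriv2_UtSS !hornerEn IH0 IH1 deriv_Ut_at2.
  by rewrite !natrM !mulrS; field.
Qed.

End ValuesAt2.

Lemma deriv_natr (R : nzRingType) k : (k%:R : {poly R})^`() = 0.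
Proof. by rewrite -polyC_natr derivC. Qed.

Lemma deriv1 (R : nzRingType) : (1 : {poly R})^`() = 0.
Proof. by rewrite -polyC1 derivC. Qed.

Section PhiSqr.
Variable R : comNzRingType.
Local Notation U := (Ut R).
Local Notation Ct := (Ct R).

Lemma PhiE n : Phi R n = (n.+1%:R * 'X ^+ 2 - 6 * 'X - (4 * n)%:R) * U n
  + 2 * ('X + 2) * U n.-1 + 2 * ('X + 2).
Proof. by rewrite /Phi -!mul_polyC !polyC_natr. Qed.

(* [Apoly n] is the quadratic coefficient [(n+1)x^2 - 6x - 4n] of [Phi n]
   at [x = X^2 - 2]. *)
Definition Apoly n : {poly R} := n.+1%:R * 'X ^+ 4 - (4 * n + 10)%:R * 'X ^+ 2 + 16.

Definition Epoly n : {poly R} := Apoly n * Ct n.+1 + 2 * 'X ^+ 2 * Ct n.-1.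

Lemma Phi_comp_sqr n :
  'X * (Phi R n.+1 \Po ('X ^+ 2 - 2)) = U n.+1 * Epoly n.+1.
Proof.
rewrite /Phi -!mul_polyC /=.
rewrite !(comp_polyB, comp_polyD, comp_polyM, comp_polyC, rmorphXn, comp_polyX).
transitivity (Apoly n.+1 * ('X * (U n.+1 \Po ('X ^+ 2 - 2)))
  + 2 * 'X ^+ 2 * ('X * (U n \Po ('X ^+ 2 - 2))) + 2 * 'X ^+ 3).
  by rewrite /Apoly !polyC_natr !natrD !natrM !mulrS; ring.
rewrite !Ut_comp_sqr.
transitivity (U n.+1 * Epoly n.+1
  - 2 * 'X ^+ 2 * (U n.+1 * Ct n - U n * Ct n.+1 - 'X)); first by rewrite /Epoly; ring.
by rewrite Ut_Ct_wronskian subrr mulr0 subr0.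
Qed.

Lemma Epoly_at0 n : (Epoly n.+1).[0] = 16 * (Ct n.+2).[0].
Proof. by rewrite /Epoly /Apoly !hornerEn; ring. Qed.

End PhiSqr.

Section PhiAt2.
Variable F : numFieldType.
Local Notation U := (Ut F).

Lemma Phi_at2 n : (Phi F n.+1).[2] = 0.
Proof. by rewrite PhiE !hornerEn !Ut_at2 !natrM !mulrS; ring. Qed.

Lemma deriv_Phi_at2 n : ((Phi F n.+1)^`()).[2] = 0.
Proof.
have n6 : (6%:R : F) != 0 by rewrite pnatr_eq0.
rewrite PhiE !(deriv_natr, deriv1, derivB, derivD, derivM, derivX) !hornerEn.
by rewrite !Ut_at2 !deriv_Ut_at2 !natrM !mulrS; field.
Qed.

Lemma deriv2_Phi_at2 n : ((Phi F n.+1)^`(2)).[2] =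
  (2 * (n.+1 ^ 4 + 4 * n.+1 ^ 3 + 5 * n.+1 ^ 2 + 5 * n.+1 + 3))%:R / 3.
Proof.
have n6 : (6%:R : F) != 0 by rewrite pnatr_eq0.
have n3 : (3%:R : F) != 0 by rewrite pnatr_eq0.
have n60 : (60%:R : F) != 0 by rewrite pnatr_eq0.
rewrite derivnS derivn1 PhiE.
rewrite !(deriv_natr, deriv1, derivB, derivD, derivM, derivX, deriv0) !hornerEn.
rewrite -derivn1 -derivnS !deriv2_Ut_at2 !Ut_at2 !deriv_Ut_at2.
by rewrite !natrM !natrD !natrX !natrM !mulrS; field.
Qed.

Lemma Phi_atN2 n : (Phi F n.+1).[-2] = 16 * (-1) ^+ n.+1 * n.+2%:R.
Proof. by rewrite PhiE !hornerEn !Ut_atN2 !natrM !mulrS !exprS; ring. Qed.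

End PhiAt2.

Section CtRoots.
Variable R : numDomainType.
Local Notation U := (Ut R).
Local Notation Ct := (Ct R).

Lemma Ut_neq0_at_root_Ct k t : root (Ct k.+1) t -> (U k).[t] != 0.
Proof.
move=> /rootP Ct_t; apply/negP => /eqP Ut_t.
have := congr1 (horner^~ t) (Ct_pell R k).
by rewrite /= !hornerEn Ct_t Ut_t !mulr0 subr0 => /eqP; rewrite eq_sym pnatr_eq0.
Qed.

Lemma deriv_Ct_neq0_at_root k t : root (Ct k.+1) t -> ((Ct k.+1)^`()).[t] != 0.
Proof.
by move=> rt; rewrite deriv_Ct !hornerEn mulf_neq0 ?pnatr_eq0 ?Ut_neq0_at_root_Ct.
Qed.

Lemma CtUt_at_root_Ct k t : root (Ct k.+2) t -> (Ct k).[t] * (U k.+1).[t] = 2 * t.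
Proof.
case: k => [|k] /rootP Ct_t; first by rewrite Ct0 Ut1 !hornerEn.
have := congr1 (horner^~ t) (Ct_Ut_shift R k).
by rewrite /= !hornerEn Ct_t mul0r subr0.
Qed.

Lemma Epoly_mul_deriv_at_root_Ct n t : root (Ct n.+2) t ->
  (Epoly R n.+1).[t] * ((Ct n.+2)^`()).[t] = 4 * n.+2%:R * t ^+ 3.
Proof.
move=> rt; have CUt := CtUt_at_root_Ct rt; move/rootP: rt => Ct_t.
rewrite /Epoly deriv_Ct !hornerEn Ct_t /=.
transitivity (2 * t ^+ 2 * n.+2%:R * ((Ct n).[t] * (U n.+1).[t])); first by ring.
by rewrite CUt; ring.
Qed.

End CtRoots.

Lemma Ct_at2 (R : comNzRingType) k : (Ct R k).[2] = 2.
Proof. by have := Ct_recip k (mulr1 (1 : R)); rewrite expr1n. Qed.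

Lemma Ct_atN2 (R : comNzRingType) k : (Ct R k).[-2] = 2 * (-1) ^+ k.
Proof.
have wv : (-1 : R) * -1 = 1 by rewrite mulrNN mulr1.
have -> : (-2 : R) = -1 + -1 by rewrite -opprD.
by rewrite Ct_recip //; ring.
Qed.

Lemma gtrN2_real (R : numDomainType) (x : R) : -2 < x -> x \is Num.real.
Proof. by move=> /ltW /ler_real <-; rewrite realN realn. Qed.

Section UnitCircle.
Variable C : numClosedFieldType.

Lemma recip_decomposition (y : C) : exists w v : C, w * v = 1 /\ y = w + v.
Proof.
have n2 : (2 : C) != 0 by rewrite pnatr_eq0.
set s := sqrtC (y ^+ 2 - 4).
exists ((y + s) / 2), ((y - s) / 2); split; last by field.
transitivity ((y ^+ 2 - s ^+ 2) / 4); first by field.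
by rewrite sqrtCK; field.
Qed.

Lemma root_unity_recip_itv (w v : C) m : (0 < m)%N -> w * v = 1 -> w ^+ m = 1 ->
  w + v != 2 -> w + v != -2 -> -2 < w + v < 2.
Proof.
move=> m_gt0 wv wm w2 wN2.
have nw : `|w| = 1.
  by apply/eqP; rewrite -(pexpr_eq1 m_gt0) // -normrX wm normr1.
have vE : v = w^* by rewrite -(mulr1_eq wv) invC_norm nw expr1n invr1 mul1r.
have yR : w + v \is Num.real by rewrite CrealE vE raddfD /= conjCK addrC.
have : `|w + v| <= 2.
  by apply: le_trans (ler_normD w v) _; rewrite -(mulr1_eq wv) normfV nw invr1.
by rewrite real_ler_norml // !le_eqVlt eq_sym (negPf wN2) (negPf w2).
Qed.

Lemma root_Ut_itv k (y : C) : root (Ut C k) y -> -2 < y < 2.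
Proof.
move=> ry; have [w [v [wv yE]]] := recip_decomposition y.
have y2 : y != 2 by apply: contraTneq ry => ->; rewrite rootE Ut_at2 pnatr_eq0.
have yN2 : y != -2.
  apply: contraTneq ry => ->.
  by rewrite rootE Ut_atN2 mulf_neq0 ?signr_eq0 ?pnatr_eq0.
have wv_neq0 : w - v != 0.
  have sq : (w - v) ^+ 2 = (y - 2) * (y + 2).
    transitivity ((w + v) ^+ 2 - 4 * (w * v)); first by ring.
    by rewrite wv mulr1 yE; ring.
  have : (y - 2) * (y + 2) != 0 by rewrite mulf_neq0 // ?subr_eq0 // addr_eq0.
  by rewrite -sq expf_eq0.
have : (w - v) * (Ut C k).[y] = 0 by rewrite (rootP ry) mulr0.
rewrite yE Ut_recip // => /eqP; rewrite subr_eq0 => /eqP wvk.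
rewrite yE in y2 yN2 *; apply: (root_unity_recip_itv (m := k.+1 + k.+1)) => //.
by rewrite exprD {2}wvk -exprMn wv expr1n.
Qed.

Lemma root_Ct_itv k (y : C) : root (Ct C k.+1) y -> -2 < y < 2.
Proof.
move=> ry; have [w [v [wv yE]]] := recip_decomposition y.
have y2 : y != 2 by apply: contraTneq ry => ->; rewrite rootE Ct_at2 pnatr_eq0.
have yN2 : y != -2.
  apply: contraTneq ry => ->.
  by rewrite rootE Ct_atN2 mulf_neq0 ?signr_eq0 ?pnatr_eq0.
move: ry; rewrite rootE yE Ct_recip // addr_eq0 => /eqP wvk.
rewrite yE in y2 yN2 *; apply: (root_unity_recip_itv (m := (k.+1 + k.+1) * 2)) => //.
by rewrite exprM exprD {2}wvk mulrN -exprMn wv expr1n sqrrN expr1n.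
Qed.

End UnitCircle.

Lemma deriv_mul_XsubC_at (R : comNzRingType) (q : {poly R}) a :
  ((q * ('X - a%:P))^`()).[a] = q.[a].
Proof. by rewrite derivM derivXsubC mulr1 !hornerEn subrr mulr0 add0r. Qed.

Section RealRoots.
Variable R : rcfType.
Implicit Types (p q g : {poly R}) (a b c : R).

Lemma noroot_horner_mul_gt0 q a b : a <= b ->
  (forall c, a <= c <= b -> ~~ root q c) -> 0 < q.[a] * q.[b].
Proof.
move=> ab noroot; rewrite ltNge; apply/negP => /(polyrcf.poly_ivt ab) [c].
by rewrite in_itv /= => /noroot /negPf ->.
Qed.

Lemma deriv_mul_lt0_consecutive_roots p a b : a < b -> root p a -> root p b ->
  (p^`()).[a] != 0 -> (p^`()).[b] != 0 ->
  (forall c, a < c < b -> ~~ root p c) -> (p^`()).[a] * (p^`()).[b] < 0.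
Proof.
move=> ab /factor_theorem [q1 ->] rb da db gap.
have /factor_theorem [q q1E] : root q1 b.
  move: rb; rewrite rootE !hornerEn mulf_eq0 subr_eq0 => /orP[//|/eqP ba].
  by move: ab; rewrite ba ltxx.
have pE : q1 * ('X - a%:P) = q * ('X - a%:P) * ('X - b%:P).
  by rewrite q1E -!mulrA [_ * ('X - a%:P)]mulrC.
rewrite deriv_mul_XsubC_at in da *; rewrite pE deriv_mul_XsubC_at in db *.
rewrite q1E !hornerEn in da *.
have qab : 0 < q.[a] * q.[b].
  apply: noroot_horner_mul_gt0 (ltW ab) _ => c /andP[ac cb]; apply/negP => /rootP qc.
  have [eac|nca] := eqVneq a c; first by move: da; rewrite eac qc mul0r eqxx.
  have [ecb|ncb] := eqVneq c b.
    by move: db; rewrite -ecb !hornerEn qc !mul0r eqxx.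
  have := gap c; rewrite !lt_neqAle nca ncb ac cb => /(_ isT) /negP; apply.
  by rewrite pE rootE !hornerEn qc !mul0r.
have -> : q.[a] * (a - b) * (q.[b] * (b - a)) = - (q.[a] * q.[b] * (b - a) ^+ 2).
  by ring.
by rewrite oppr_lt0 mulr_gt0 // exprn_gt0 // subr_gt0.
Qed.

Lemma mul_lt0_transfer (x y u v : R) : 0 < x * u -> 0 < y * v -> u * v < 0 -> x * y < 0.
Proof. by move=> xu yv uv; nra. Qed.

Lemma interlaced_roots p g x0 s hi :
  path <%R x0 s -> all (fun x => x < hi) s -> all (root p) (x0 :: s) ->
  (forall x, x0 < x -> root p x -> x \in s) ->
  all (fun x => 0 < g.[x] * (p^`()).[x]) (x0 :: s) ->
  exists rs, [/\ size rs = size s, uniq rs, all (root g) rs &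
                 all (fun r => x0 < r < hi) rs].
Proof.
elim: s x0 => [|y s IH] x0 /=; first by exists [::].
move=> /andP[x0y ys] /andP[yhi shi] /and3P[px0 py ps] gap /and3P[gx0 gy gs].
have y_lt : all (fun x => y < x) s by apply: order_path_min ys; apply: lt_trans.
have pys : all (root p) (y :: s) by rewrite /= py.
have gys : all (fun x => 0 < g.[x] * (p^`()).[x]) (y :: s) by rewrite /= gy.
have gap_s x : y < x -> root p x -> x \in s.
  move=> yx /(gap x (lt_trans x0y yx)).
  by rewrite inE => /orP[/eqP xy|//]; move: yx; rewrite xy ltxx.
have [rs [rs_size rs_uniq rs_root rs_itv]] := IH y ys shi pys gap_s gys.
have [r r_itv gr] : {r | r \in `]x0, y[ & root g r}.
  apply: polyrcf.poly_ivtoo (ltW x0y) _.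
  apply: (mul_lt0_transfer gx0 gy).
  apply: deriv_mul_lt0_consecutive_roots => //.
  + by move: gx0; apply: contraTneq => ->; rewrite mulr0 ltxx.
  + by move: gy; apply: contraTneq => ->; rewrite mulr0 ltxx.
  move=> c /andP[x0c cy]; apply/negP => /(gap c x0c).
  rewrite inE => /orP[/eqP cE|/(allP y_lt) yc]; first by move: cy; rewrite cE ltxx.
  by move: (lt_trans cy yc); rewrite ltxx.
move: r_itv; rewrite in_itv /= => /andP[x0r ry].
exists (r :: rs); split => /=; rewrite ?rs_size ?gr //.
- apply/andP; split => //; apply/negP => /(allP rs_itv) /andP[yr _].
  by move: (lt_trans ry yr); rewrite ltxx.
- rewrite x0r (lt_trans ry yhi) /=; apply/allP => x /(allP rs_itv) /andP[yx ->].
  by rewrite (lt_trans x0y yx).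
Qed.

Lemma interlaced_roots_in p g S lo hi :
  sorted <%R S -> (forall x, root p x = (x \in S)) -> all (fun x => lo < x < hi) S ->
  {in S, forall x, 0 < g.[x] * (p^`()).[x]} ->
  exists rs, [/\ size rs = (size S).-1, uniq rs, all (root g) rs &
                 all (fun r => lo < r < hi) rs].
Proof.
case: S => [|x0 s] /= s_path p_roots; first by exists [::].
move=> /andP[/andP[lo_x0 _] s_itv] sign.
have s_hi : all (fun x => x < hi) s by apply/allP => x /(allP s_itv) /andP[].
have p_all : all (root p) (x0 :: s) by apply/allP => x; rewrite p_roots.
have p_gap x : x0 < x -> root p x -> x \in s.
  by rewrite p_roots inE => x0x /orP[/eqP xx0|//]; move: x0x; rewrite xx0 ltxx.
have [rs [rs_size rs_uniq rs_root rs_itv]] :=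
  interlaced_roots s_path s_hi p_all p_gap (introT allP sign).
exists rs; split => //.
by apply/allP => r /(allP rs_itv) /andP[x0r ->]; rewrite (lt_trans lo_x0 x0r).
Qed.

End RealRoots.

Section EpolyRoots.
Variables (R : rcfType) (n : nat) (ts : seq R).
Hypothesis ts_sorted : sorted <%R ts.
Hypothesis ts_size : size ts = n.+2.
Hypothesis ts_roots : forall t, root (Ct R n.+2) t = (t \in ts).
Hypothesis ts_itv : all (fun t => -2 < t < 2) ts.

Local Notation C := (Ct R n.+2).
Local Notation E := (Epoly R n.+1).

Lemma Epoly_roots_even : C.[0] != 0 ->
  exists rs, [/\ size rs = n.+2, uniq rs, all (root E) rs &
                 all (fun r => -2 < r < 2) rs].
Proof.
move=> C0; have ts0 : 0 \notin ts by rewrite -ts_roots rootE C0.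
have S_uniq : uniq (0 :: ts).
  by rewrite /= ts0 (sorted_uniq lt_trans ltxx ts_sorted).
have S_sorted : sorted <%R (sort <=%R (0 :: ts)).
  by rewrite lt_sorted_uniq_le sort_uniq S_uniq sort_le_sorted.
have S_mem x : (x \in sort <=%R (0 :: ts)) = (x \in 0 :: ts) by rewrite mem_sort.
have S_size : size (sort <=%R (0 :: ts)) = n.+3 by rewrite size_sort /= ts_size.
have S_itv : all (fun x => -2 < x < 2) (sort <=%R (0 :: ts)).
  apply/allP => x; rewrite S_mem inE => /orP[/eqP -> |/(allP ts_itv)//].
  by apply/andP; split; rewrite ?oppr_lt0 ltr0n.
have p_root x : root ('X * C) x = (x \in sort <=%R (0 :: ts)).
  by rewrite S_mem inE rootM rootX ts_roots.
have sign x : x \in sort <=%R (0 :: ts) -> 0 < E.[x] * (('X * C)^`()).[x].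
  have -> : (('X * C)^`()).[x] = C.[x] + x * (C^`()).[x].
    by rewrite derivM derivX mul1r !hornerEn.
  rewrite S_mem inE => /orP[/eqP -> | xts].
    by rewrite Epoly_at0 mul0r addr0 -mulrA mulr_gt0 ?ltr0n // -expr2 exprn_even_gt0.
  have x0 : x != 0 by apply: contraNneq ts0 => <-.
  rewrite (rootP (_ : root C x)) ?ts_roots // add0r mulrCA.
  rewrite Epoly_mul_deriv_at_root_Ct ?ts_roots // mulrCA -exprS.
  by rewrite mulr_gt0 ?exprn_even_gt0 //= mulr_gt0 ?ltr0n.
have [rs [rs_size rs_uniq rs_root rs_itv]] :=
  interlaced_roots_in S_sorted p_root S_itv sign.
by exists rs; rewrite rs_size S_size.
Qed.

Lemma Epoly_roots_odd : C.[0] = 0 ->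
  exists rs, [/\ size rs = n.+2, uniq rs, all (root E) rs &
                 all (fun r => -2 < r < 2) rs].
Proof.
move=> C0; have C_root0 : root C 0 by apply/rootP.
have [D CD] := factor_theorem _ _ C_root0.
set F := Apoly R n.+1 * D + 2 * 'X * Ct R n.
have EF : E = F * 'X by rewrite /Epoly CD polyC0 subr0 /F /=; ring.
have F0 : F.[0] = 16 * D.[0] by rewrite /F /Apoly !hornerEn; ring.
have dC0 : (C^`()).[0] = D.[0] by rewrite CD deriv_mul_XsubC_at.
have D0 : D.[0] != 0 by rewrite -dC0 deriv_Ct_neq0_at_root.
have sign t : t \in ts -> 0 < F.[t] * (C^`()).[t].
  move=> tts; have [-> | t0] := eqVneq t 0.
    by rewrite F0 dC0 -mulrA mulr_gt0 ?ltr0n // -expr2 exprn_even_gt0.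
  have := Epoly_mul_deriv_at_root_Ct (_ : root C t); rewrite ts_roots => /(_ tts).
  rewrite EF hornerM hornerX mulrAC [t ^+ 3]exprSr mulrA => /(mulIf t0) ->.
  by rewrite mulr_gt0 ?exprn_even_gt0 //= mulr_gt0 ?ltr0n.
have [rs [rs_size rs_uniq rs_root rs_itv]] :=
  interlaced_roots_in ts_sorted ts_roots ts_itv sign.
exists (0 :: rs); split => /=.
- by rewrite rs_size ts_size.
- rewrite rs_uniq andbT; apply: contraL D0 => /(allP rs_root) /rootP.
  by rewrite F0 negbK => /eqP; rewrite mulf_eq0 pnatr_eq0.
- rewrite EF rootM rootX eqxx orbT /=.
  by apply/allP => r /(allP rs_root) Fr; rewrite rootM Fr.
- by rewrite oppr_lt0 ltr0n rs_itv.
Qed.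

Lemma Epoly_roots :
  exists rs, [/\ size rs = n.+2, uniq rs, all (root E) rs &
                 all (fun r => -2 < r < 2) rs].
Proof. by have [/Epoly_roots_odd | /Epoly_roots_even] := eqVneq C.[0] 0. Qed.

End EpolyRoots.

Section Sizes.
Variable R : comNzRingType.
Implicit Types p q : {poly R}.

Lemma size_polyD_leq p q m :
  (size p <= m)%N -> (size q <= m)%N -> (size (p + q)%R <= m)%N.
Proof. by move=> sp sq; apply: leq_trans (size_polyD _ _) _; rewrite geq_max sp. Qed.

Lemma size_polyM_leq p q a b :
  (size p <= a.+1)%N -> (size q <= b.+1)%N -> (size (p * q)%R <= (a + b).+1)%N.
Proof. by move=> sp sq; apply: leq_trans (size_polyMleq _ _) _; lia. Qed.

Lemma size_natr_leq k : (size (k%:R : {poly R}) <= 1)%N.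
Proof. by rewrite -polyC_natr size_polyC_leq1. Qed.

Lemma size_lead_coef_Ct k : size (Ct R k.+1) = k.+2 /\ lead_coef (Ct R k.+1) = 1.
Proof.
elim/nat_ind2: k => [||k [s0 _] [s1 l1]]; first by rewrite Ct1 size_polyX lead_coefX.
  have s0 : (size (- Ct R 0) < size ('X * 'X : {poly R})%R)%N.
    rewrite size_polyN size_mulX ?polyX_eq0 // size_polyX Ct0.
    exact: leq_ltn_trans (size_natr_leq 2) _.
  rewrite CtSS Ct1 (size_polyDl s0) lead_coefDl // lead_coefMX lead_coefX.
  by rewrite size_mulX ?polyX_eq0 // size_polyX.
have Ct_neq0 : Ct R k.+2 != 0 by rewrite -size_poly_eq0 s1.
have sX : size (Ct R k.+2 * 'X) = k.+4 by rewrite size_mulX // s1.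
have sN : (size (- Ct R k.+1) < size (Ct R k.+2 * 'X)%R)%N by rewrite size_polyN sX s0.
by rewrite CtSS mulrC (size_polyDl sN) sX lead_coefDl // lead_coefMX l1.
Qed.

Lemma size_Ct_leq k : (size (Ct R k) <= k.+1)%N.
Proof.
by case: k => [|k]; [rewrite Ct0 size_natr_leq | rewrite (size_lead_coef_Ct k).1].
Qed.

Lemma size_Epoly_leq n : (size (Epoly R n.+1) <= n + 7)%N.
Proof.
have sX k : (size ('X ^+ k : {poly R}) <= k.+1)%N by rewrite size_polyXn.
have sA : (size (Apoly R n.+1) <= 5)%N.
  rewrite /Apoly; apply: size_polyD_leq; last exact: leq_trans (size_natr_leq _) _.
  apply: size_polyD_leq; last rewrite size_polyN.
    exact: (size_polyM_leq (a := 0) (size_natr_leq _) (sX 4)).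
  exact: leq_trans (size_polyM_leq (a := 0) (size_natr_leq _) (sX 2)) _.
apply: size_polyD_leq.
  rewrite (_ : (n + 7 = (4 + n.+2).+1)%N) //; last lia.
  by apply: size_polyM_leq sA _; rewrite (size_lead_coef_Ct n.+1).1.
apply: leq_trans (size_polyM_leq (size_polyM_leq (size_natr_leq _) (sX 2))
                   (size_Ct_leq n)) _; lia.
Qed.

End Sizes.

Section Maps.
Variables (R S : comNzRingType) (f : {rmorphism R -> S}).

Lemma map_Ct k : map_poly f (Ct R k) = Ct S k.
Proof.
elim/nat_ind2: k => [||k IH0 IH1]; first by rewrite !Ct0 rmorph_nat.
  by rewrite !Ct1 map_polyX.
by rewrite !CtSS rmorphB rmorphM /= map_polyX IH0 IH1.
Qed.

Lemma map_Epoly n : map_poly f (Epoly R n) = Epoly S n.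
Proof.
rewrite /Epoly /Apoly !(rmorph_nat, rmorphB, rmorphD, rmorphM, rmorphXn) /=.
by rewrite map_polyX !map_Ct.
Qed.

End Maps.

Lemma separable_Ct (C : numClosedFieldType) k : separable_poly (Ct C k.+1).
Proof.
rewrite unlock; apply: Pdiv.ClosedField.root_coprimep => t.
exact: deriv_Ct_neq0_at_root.
Qed.

(* The roots of [Ct] are real, so they can be counted in the real closed
   field [algR]. *)
Lemma Ct_roots_algR n : exists ts : seq algR,
  [/\ sorted <%R ts, size ts = n.+2, (forall t, root (Ct algR n.+2) t = (t \in ts))
    & all (fun t => -2 < t < 2) ts].
Proof.
have [r CE] := closed_field_poly_normal (Ct algC n.+2).
have [Ct_size Ct_lead] := size_lead_coef_Ct algC n.+1.
rewrite Ct_lead scale1r in CE.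
have r_roots z : root (Ct algC n.+2) z = (z \in r) by rewrite CE root_prod_XsubC.
have r_uniq : uniq r by rewrite -separable_prod_XsubC -CE separable_Ct.
have r_itv z : z \in r -> -2 < z < 2 by rewrite -r_roots => /root_Ct_itv.
have r_real z : z \in r -> z \is Num.real by move=> /r_itv /andP[/gtrN2_real].
set ts := sort <=%R (pmap insub r : seq algR).
have ts_val : map algRval (pmap insub r : seq algR) = r.
  rewrite (pmap_filter (@insubK _ _ algR)); apply/all_filterP/allP => z /r_real zR.
  by rewrite insubT.
have ts_mem t : (t \in ts) = (algRval t \in r).
  by rewrite /ts mem_sort -[in RHS]ts_val (mem_map val_inj).
exists ts; split.
- rewrite /ts lt_sorted_uniq_le sort_uniq sort_le_sorted andbT.
  by rewrite -(map_inj_uniq val_inj) ts_val.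
- move: Ct_size; rewrite CE size_prod_XsubC /ts size_sort.
  by rewrite -[in X in X -> _]ts_val size_map => -[].
- by move=> t; rewrite ts_mem -r_roots -(map_Ct algRval) mapf_root.
- by apply/allP => t /[!ts_mem] /r_itv.
Qed.

Lemma double_root_factor (R : comNzRingType) (p : {poly R}) a :
  p.[a] = 0 -> (p^`()).[a] = 0 -> exists q, p = q * ('X - a%:P) ^+ 2.
Proof.
move=> /eqP pa p'a; have /factor_theorem [q1 pE] : root p a by [].
have /factor_theorem [q q1E] : root q1 a.
  by rewrite rootE -(deriv_mul_XsubC_at q1 a) -pE p'a.
by exists q; rewrite pE q1E expr2 mulrA.
Qed.

Section EpolySquareFactor.
Variable F : numFieldType.

Lemma sqr_dvd_Epoly n :
  (('X - 2%:P) * ('X - (-2)%:P)) ^+ 2 %| Epoly F n.+1.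
Proof.
have [q Pq] := double_root_factor (Phi_at2 F n) (deriv_Phi_at2 F n).
have comp2 : ('X - 2%:P) \Po ('X ^+ 2 - 2) = ('X - 2%:P) * ('X - (-2)%:P) :> {poly F}.
  by rewrite comp_polyB comp_polyX comp_polyC polyCN !polyC_natr; ring.
have := Phi_comp_sqr F n; rewrite Pq comp_polyM rmorphXn /= comp2 mulrA => UE.
have cop : coprimep ((('X - 2%:P) * ('X - (-2)%:P)) ^+ 2) (Ut F n.+1).
  rewrite coprimep_expl // coprimepMl !(coprimep_sym _ (Ut F n.+1)) !coprimep_XsubC.
  by rewrite !rootE Ut_at2 Ut_atN2 mulf_neq0 ?signr_eq0 ?pnatr_eq0.
by rewrite -(Gauss_dvdpr _ cop) -UE dvdp_mull.
Qed.

Lemma Epoly_neq0 n : Epoly F n.+1 != 0.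
Proof.
have Phi_neq0 : Phi F n.+1 != 0.
  apply/negP => /eqP Phi0; have /eqP := Phi_atN2 F n.
  by rewrite Phi0 horner0 eq_sym !mulf_eq0 signr_eq0 !pnatr_eq0.
have : 'X * (Phi F n.+1 \Po ('X ^+ 2 - 2)) != 0.
  by rewrite mulf_neq0 ?polyX_eq0 // comp_poly_eq0 // -polyC_natr size_XnsubC.
by rewrite Phi_comp_sqr mulf_eq0 negb_or => /andP[].
Qed.

End EpolySquareFactor.

Lemma sqr_sub2_itv (R : numDomainType) (y : R) : -2 < y < 2 -> -2 <= y ^+ 2 - 2 < 2.
Proof.
move=> y_itv; have yR : y \is Num.real by case/andP: y_itv => /gtrN2_real.
have ny : `|y| < 2 by rewrite real_ltr_norml.
rewrite -(real_normK yR) lerBrDr addNr exprn_ge0 //= ltrBlDr.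
by rewrite (_ : 2 + 2 = 2 ^+ 2) ?ltrXn2r //; ring.
Qed.

Lemma Epoly_factor_algR n : exists (c : algR) (rs : seq algR),
  [/\ c != 0, all (fun r => -2 < r < 2) rs &
      Epoly algR n.+1 = c%:P * \prod_(r <- rs) ('X - r%:P)
                        * (('X - 2%:P) * ('X - (-2)%:P)) ^+ 2].
Proof.
have [ts [ts_sorted ts_size ts_roots ts_itv]] := Ct_roots_algR n.
have [rs [rs_size rs_uniq rs_root rs_itv]] :=
  Epoly_roots ts_sorted ts_size ts_roots ts_itv.
have [E0 EE0] := dvdpP _ _ (sqr_dvd_Epoly algR n).
have E0_root : all (root E0) rs.
  apply/allP => r r_rs; have /andP[rN2 r2] := allP rs_itv r r_rs.
  have := allP rs_root r r_rs; rewrite EE0 rootM expr2 !rootM !root_XsubC.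
  by rewrite (lt_eqF r2) (gt_eqF rN2) !orbF.
have [q E0q] : exists q, E0 = q * \prod_(r <- rs) ('X - r%:P).
  by apply: uniq_roots_prod_XsubC E0_root _; rewrite uniq_rootsE.
have W2_size : size ((('X - 2%:P) * ('X - (-2)%:P)) ^+ 2 : {poly algR}) = 5.
  by rewrite exprMn size_mul ?size_exp_XsubC // expf_neq0 // polyXsubC_eq0.
have E_neq0 := Epoly_neq0 algR n.
have q_neq0 : q != 0 by apply: contra_neq E_neq0 => q0; rewrite EE0 E0q q0 !mul0r.
have prod_neq0 : \prod_(r <- rs) ('X - r%:P) != 0 :> {poly algR}.
  by rewrite -size_poly_eq0 size_prod_XsubC.
have q_size : (size q <= 1)%N.
  have := size_Epoly_leq algR n.
  have W2_neq0 : (('X - 2%:P) * ('X - (-2)%:P)) ^+ 2 != 0 :> {poly algR}.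
    by rewrite -size_poly_eq0 W2_size.
  rewrite EE0 E0q (size_mul (mulf_neq0 q_neq0 prod_neq0) W2_neq0) W2_size.
  rewrite (size_mul q_neq0 prod_neq0) size_prod_XsubC rs_size.
  by set s := size q; lia.
rewrite EE0 E0q (size1_polyC q_size); exists q`_0, rs; split => //.
by apply: contra_neq q_neq0 => q0; rewrite (size1_polyC q_size) q0.
Qed.

Lemma root_Epoly_itv n (y : algC) :
  root (Epoly algC n.+1) y -> y != 2 -> y != -2 -> -2 < y < 2.
Proof.
move=> Ey y2 yN2; have [c [rs [c_neq0 rs_itv E_fact]]] := Epoly_factor_algR n.
move: Ey; rewrite -(map_Epoly algRval) E_fact rmorphM rmorphXn !rmorphM rmorph_prod.
rewrite /= expr2 map_polyC !map_polyXsubC !rootM !root_XsubC rmorphN rmorph_nat.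
rewrite rootC (negPf y2) (negPf yN2) /= orbF fmorph_eq0 (negPf c_neq0) /=.
under eq_bigr do rewrite map_polyXsubC.
rewrite -(big_map algRval predT (fun z => 'X - z%:P)) root_prod_XsubC.
by case/mapP => r /(allP rs_itv) r_itv ->.
Qed.

Lemma root_Phi_sqr_itv n (y : algC) :
  root (Phi algC n.+1) (y ^+ 2 - 2) -> y ^+ 2 != 4 -> -2 < y < 2.
Proof.
move=> Py y4; have [yN2 y2] : y != -2 /\ y != 2.
  by split; apply: contraNneq y4 => ->; apply/eqP; ring.
have qy : ('X ^+ 2 - 2 : {poly algC}).[y] = y ^+ 2 - 2 by rewrite !hornerEn.
have := congr1 (horner^~ y) (Phi_comp_sqr algC n).
rewrite /= hornerM hornerX horner_comp qy (rootP Py) mulr0 hornerM.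
move=> /esym /eqP; rewrite mulf_eq0 => /orP[/eqP Uy | /eqP Ey].
  by apply: (root_Ut_itv (k := n.+1)); exact/rootP.
by apply: (root_Epoly_itv (n := n) _ y2 yN2); exact/rootP.
Qed.

Theorem propositionB5 (n : nat) (hn : (1 <= n)%N) :
  let P : {poly algC} := Phi algC n in
  [/\ P.[2] = 0, (P^`()).[2] = 0, (P^`(2)).[2] != 0
    & forall z : algC, root P z -> z != 2 ->
        z \is Num.real /\ (-2 < z < 2)].
Proof.
case: n hn => // n _ P; split; [exact: Phi_at2 | exact: deriv_Phi_at2 | |].
  by rewrite deriv2_Phi_at2 mulf_neq0 ?invr_eq0 ?pnatr_eq0.
move=> z Pz z2; pose y := sqrtC (z + 2).
have zE : z = y ^+ 2 - 2 by rewrite sqrtCK addrK.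
have y_itv : -2 < y < 2.
  apply: (root_Phi_sqr_itv (n := n)); first by rewrite -zE.
  by apply: contraNneq z2 => y4; rewrite zE y4; apply/eqP; ring.
have zN2 : z != -2.
  apply: contraTneq Pz => ->.
  by rewrite rootE Phi_atN2 !mulf_neq0 ?signr_eq0 ?pnatr_eq0.
have /andP[zN2' z2'] := sqr_sub2_itv y_itv; rewrite -zE in zN2' z2'.
have zN2lt : -2 < z by rewrite lt_neqAle eq_sym zN2.
by rewrite zN2lt z2' gtrN2_real.
Qed.
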